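(* Let $p$ be a prime and $\psi\in\mathbb{C}_p(z)$ a nonconstant rational map, and let $x\in\mathbb{C}_p\setminus\mathrm{Crit}(\psi)$. Let $D\subset\mathbb{C}_p$ be an open disk containing $x$ such that $D\cap\mathrm{Crit}(\psi)=\emptyset$ and $\infty\notin\psi(D)$. Then $$|\psi'(x)|\ge\frac{p^{-\delta_{\max}d'}\,\mathrm{diam}(\psi(D))}{p^{-\delta_{\max}}\,\mathrm{diam}(D)},$$ where $\delta_{\max}=\frac{1}{p-1}$ and $d'\ge1$ is the degree of $\psi$ on $D$.
   Context: $\mathbb{C}_p$ is the completion of an algebraic closure of $\mathbb{Q}_p$ with its non-archimedean absolute value $|\cdot|$; disks and diameters are with respect to $|\cdot|$. $\mathrm{Crit}(\psi)$ is the set of critical points of $\psi$ in $\mathbb{P}^1_{\mathbb{C}_p}$. The degree of $\psi$ on $D$ is the number of preimages in $D$, counted with multiplicity, of a point of $\psi(D)$. *)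

From HB Require Import structures.
From mathcomp Require Import all_boot all_order all_algebra.
From mathcomp Require Import all_classical all_reals all_analysis.
Set Implicit Arguments. Unset Strict Implicit. Unset Printing Implicit Defensive.
Import Order.TTheory GRing.Theory Num.Theory.
Local Open Scope ring_scope.
Local Open Scope classical_set_scope.

(* A "C_p-like" field: an algebraically closed field K with a
   non-archimedean absolute value v : K -> R, complete for v, normalized by
   |p| = 1/p, with value group contained in p^Q.  (C_p is such a field.) *)
Definition Cp_like (R : realType) (K : closedFieldType) (p : nat)
    (v : K -> R) : Prop :=
  [/\ prime p,
      [/\ forall x, 0 <= v x,
      forall x, v x = 0 <-> x = 0,
      forall x y, v (x * y) = v x * v y,
      forall x y, v (x + y) <= Num.max (v x) (v y) &
      v (p%:R) = (p%:R)^-1],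
          forall x, x != 0 -> exists (m : int) (n : nat),
              (0 < n)%N /\ v x ^+ n = (p%:R : R) ^ m &
          forall u : nat -> K,
            (forall e : R, 0 < e -> exists N, forall m n,
                (N <= m)%N -> (N <= n)%N -> v (u m - u n) < e) ->
            exists l, forall e : R, 0 < e -> exists N, forall n,
                (N <= n)%N -> v (u n - l) < e].

Section RatMap.
Variables (R : realType) (K : closedFieldType).

(* The rational map psi = P/Q (P, Q coprime, Q != 0). *)
Definition rat_eval (P Q : {poly K}) (z : K) : K := P.[z] / Q.[z].

Definition rat_deriv (P Q : {poly K}) (z : K) : K :=
  (P^`().[z] * Q.[z] - P.[z] * Q^`().[z]) / (Q.[z] ^+ 2).

(* finite critical points of psi = P/Q: non-poles where psi' vanishes,
   and poles of order >= 2 *)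
Definition rat_crit (P Q : {poly K}) (z : K) : Prop :=
  (Q.[z] != 0 /\ rat_deriv P Q z = 0) \/ (Q.[z] = 0 /\ root Q^`() z).

Definition roots_mult (f : {poly K}) : seq K :=
  proj1_sig (closed_field_poly_normal f).

Definition preimage_count (P Q : {poly K}) (D : set K) (y : K) : nat :=
  count (fun z => `[< D z >]) (roots_mult (P - y *: Q)).

Definition open_disk (v : K -> R) (a : K) (r : R) : set K :=
  [set z | v (z - a) < r].

Definition diam (v : K -> R) (S : set K) : R :=
  sup [set d | exists z w, S z /\ S w /\ d = v (z - w)].

End RatMap.

From HB Require Import structures.
From mathcomp Require Import all_boot all_order all_algebra.
From mathcomp Require Import all_classical all_reals all_analysis.
From mathcomp Require Import ring zify.
Import Order.TTheory GRing.Theory Num.Theory.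
Local Open Scope ring_scope.
Set Implicit Arguments. Unset Strict Implicit.

(* Fix w in D, write psi - psi(x) = F / Q with F = P - psi(x) Q, and recentre at x.
   On the closed disk of radius rho < r around x containing w and the zeros of F that
   lie in D, the term of degree d' dominates in F (F has d' zeros there), whereas Q
   and the Wronskian G = P'Q - PQ', which have no zeros in D, are dominated by their
   constant terms.  Modulo t^d', G / Q^2 is the derivative of the power series of
   F / Q; comparing the coefficients of t^(d'-1) gives |d'| |F_d'| rho^(d'-1) <=
   |G(x)| / |Q(x)|, hence |psi(w) - psi(x)| |d'| <= rho |psi'(x)|.  It remains to take
   rho <= diam D and to use |d'| >= p^(-(d'-1)/(p-1)). *)

Section XnDivisibility.
Variable K : fieldType.
Implicit Types (A F Q u : {poly K}).

Lemma dvdp_Xn_coef n A i : 'X^n %| A -> (i < n)%N -> A`_i = 0.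
Proof. by case/dvdpP=> B ->; rewrite coefMXn => ->. Qed.

Lemma dvdp_Xn_deriv n A : 'X^(n.+1) %| A -> 'X^n %| A^`().
Proof.
case/dvdpP=> B ->; rewrite derivM derivXn /= exprS mulrA.
by rewrite -mulr_natl mulrCA dvdp_add ?dvdp_mull.
Qed.

Lemma dvdp_Xn_exp n A : A`_0 = 0 -> 'X^n %| A ^+ n.
Proof.
move=> A0; apply: dvdp_exp2r; rewrite -[X in X %| _]subr0 dvdp_XsubCl.
by rewrite /root horner_coef0 A0.
Qed.

Lemma quotient_deriv_mod n F Q u : 'X^(n.+1) %| u * Q - 1 ->
  'X^n %| (F^`() * Q - F * Q^`()) * u ^+ 2 - (F * u)^`().
Proof.
set E := u * Q - 1 => XnE.
have -> : (F^`() * Q - F * Q^`()) * u ^+ 2 - (F * u)^`() =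
    F^`() * u * E - F * u * E^`() + F * u^`() * E.
  rewrite /E derivB derivM derivC subr0 derivM; ring.
have XnE' : 'X^n %| E by apply: dvdp_trans XnE; rewrite dvdp_exp2l.
by rewrite !dvdp_add ?dvdp_sub ?dvdpNr ?dvdp_mull ?dvdp_Xn_deriv.
Qed.

End XnDivisibility.

Section Recenter.
Variable K : comNzRingType.
Implicit Types (A B : {poly K}) (x : K).

Definition recenter x A := A \Po ('X + x%:P).

Lemma recenter_horner x A w : (recenter x A).[w - x] = A.[w].
Proof. by rewrite horner_comp !hornerE subrK. Qed.

Lemma recenter_coef0 x A : (recenter x A)`_0 = A.[x].
Proof. by rewrite -horner_coef0 -[0](subrr x) recenter_horner. Qed.

Lemma recenter_deriv x A : (recenter x A)^`() = recenter x A^`().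
Proof. by rewrite deriv_comp derivD derivX derivC addr0 mulr1. Qed.

Lemma recenterM x A B : recenter x (A * B) = recenter x A * recenter x B.
Proof. exact: comp_polyM. Qed.

Lemma recenterB x A B : recenter x (A - B) = recenter x A - recenter x B.
Proof. exact: comp_polyB. Qed.

Lemma recenter_prod_XsubC x (s : seq K) (c : K) :
  recenter x (c *: \prod_(z <- s) ('X - z%:P)) = c *: \prod_(z <- s) ('X - (z - x)%:P).
Proof.
rewrite /recenter comp_polyZ; congr (_ *: _).
elim: s => [|z s IH]; first by rewrite !big_nil comp_polyC.
rewrite !big_cons comp_polyM IH; congr (_ * _).
by rewrite comp_polyB comp_polyX comp_polyC polyCB opprB addrA addrAC.
Qed.

End Recenter.

Record ultrametric_abs (R : numDomainType) (K : nzRingType) (v : K -> R) : Prop := {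
  absv_ge0 : forall x, 0 <= v x;
  absv_eq0 : forall x, v x = 0 <-> x = 0;
  absvM : forall x y, v (x * y) = v x * v y;
  absvD : forall x y, v (x + y) <= Num.max (v x) (v y) }.

Section UltrametricAbs.
Variables (R : realFieldType) (K : fieldType) (v : K -> R).
Hypothesis vU : ultrametric_abs v.
Let absv_ge0 := absv_ge0 vU.
Let absv_eq0 := absv_eq0 vU.
Let absvM := absvM vU.
Let absvD := absvD vU.

Lemma absv0 : v 0 = 0. Proof. exact/absv_eq0. Qed.

Lemma absv_gt0 x : x != 0 -> 0 < v x.
Proof. by move=> x0; rewrite lt_def absv_ge0 andbT; apply: contra_neq x0 => /absv_eq0. Qed.

Lemma absv1 : v 1 = 1.
Proof.
apply: (@mulfI _ (v 1)); first by rewrite gt_eqF ?absv_gt0 ?oner_eq0.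
by rewrite -absvM !mulr1.
Qed.

Lemma absvN x : v (- x) = v x.
Proof.
have vN1 : v (-1) = 1.
  apply/eqP; rewrite -(@pexpr_eq1 _ _ 2) // expr2 -absvM.
  by rewrite mulrNN mulr1 absv1.
by rewrite -mulN1r absvM vN1 mul1r.
Qed.

Lemma absv_distC x y : v (x - y) = v (y - x).
Proof. by rewrite -absvN opprB. Qed.

Lemma absvV x : v x^-1 = (v x)^-1.
Proof.
have [->|x0] := eqVneq x 0; first by rewrite invr0 absv0 invr0.
apply: (@mulfI _ (v x)); first by rewrite gt_eqF ?absv_gt0.
by rewrite -absvM !divff ?absv1 // gt_eqF ?absv_gt0.
Qed.

Lemma absvX x n : v (x ^+ n) = v x ^+ n.
Proof. by elim: n => [|n IH]; rewrite ?absv1 // !exprS absvM IH. Qed.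

Lemma absvD_eql x y : v y < v x -> v (x + y) = v x.
Proof.
move=> lt_yx; apply/le_anti/andP; split.
  by rewrite (le_trans (absvD _ _)) // ge_max lexx ltW.
have := absvD (x + y) (- y); rewrite addrK absvN le_max => /orP[] // le_xy.
by have := lt_le_trans lt_yx le_xy; rewrite ltxx.
Qed.

Lemma absv_sum_le (I : Type) (s : seq I) (P : pred I) (F : I -> K) (w c : R) :
  0 <= w -> 0 <= c -> (forall i, P i -> v (F i) * w <= c) ->
  v (\sum_(i <- s | P i) F i) * w <= c.
Proof.
move=> w_ge0 c_ge0 FP; elim/big_ind: _ => [|y z yc zc|//]; first by rewrite absv0 mul0r.
by rewrite (le_trans (ler_wpM2r w_ge0 (absvD y z))) // maxr_pMl // ge_max yc zc.
Qed.

Lemma absv_sum_lt (I : Type) (s : seq I) (P : pred I) (F : I -> K) (w c : R) :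
  0 <= w -> 0 < c -> (forall i, P i -> v (F i) * w < c) ->
  v (\sum_(i <- s | P i) F i) * w < c.
Proof.
move=> w_ge0 c_gt0 FP; elim/big_ind: _ => [|y z yc zc|//]; first by rewrite absv0 mul0r.
by rewrite (le_lt_trans (ler_wpM2r w_ge0 (absvD y z))) // maxr_pMl // gt_max yc zc.
Qed.

Lemma absv_natr_le1 n : v n%:R <= 1.
Proof.
elim: n => [|n IH]; first by rewrite absv0.
by rewrite -addn1 natrD (le_trans (absvD _ _)) // ge_max IH absv1 lexx.
Qed.

Lemma absv_natr_coprime p m : v p%:R < 1 -> coprime p m -> v m%:R = 1.
Proof.
move=> vp_lt1 co_pm; apply/le_anti; rewrite absv_natr_le1 /=.
have [p0|p_gt0] := posnP p; first by move: co_pm; rewrite p0 /coprime gcd0n => /eqP->; rewrite absv1.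
have [a _] := Bezoutl m p_gt0; rewrite (eqP co_pm) => /dvdnP[c Bezout].
have Bezout1 : (c * p)%:R - (a * m)%:R = 1 :> K by rewrite -Bezout natrD addrK.
have := absvD (c * p)%:R (- (a * m)%:R); rewrite Bezout1 absv1 absvN !natrM !absvM le_max.
case/orP=> le1; last by rewrite (le_trans le1) // ler_piMl ?absv_natr_le1.
suff : v c%:R * v p%:R < 1 by rewrite ltNge le1.
by rewrite (le_lt_trans _ vp_lt1) // ler_piMl ?absv_natr_le1.
Qed.

Lemma disk_dist_lt a x z r : v (x - a) < r -> v (z - a) < r -> v (z - x) < r.
Proof.
move=> xa za; rewrite -(subrKA a) (le_lt_trans (absvD _ _)) //.
by rewrite gt_max za absv_distC.
Qed.

Lemma disk_dist_le a x z r : v (x - a) <= r -> v (z - a) <= r -> v (z - x) <= r.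
Proof.
move=> xa za; rewrite -(subrKA a) (le_trans (absvD _ _)) //.
by rewrite ge_max za absv_distC.
Qed.

Lemma disk_dist_ge a x z r : v (x - a) < r -> r <= v (z - a) -> r <= v (z - x).
Proof.
move=> xa za; rewrite -(subrKA a) absvD_eql // absv_distC.
exact: lt_le_trans za.
Qed.

Section DominantTerm.
Variable rho : R.
Hypothesis rho_gt0 : 0 < rho.
Implicit Types (A B F G Q u : {poly K}).

Definition termv A n := v A`_n * rho ^+ n.

(* [dominant N A]: on the circle |t| = rho the N-th term of A is the last one
   of maximal size, i.e. N is the number of zeros of A in the disk |t| <= rho. *)
Definition dominant N A :=
  [/\ A`_N != 0, forall n, termv A n <= termv A N
    & forall n, (N < n)%N -> termv A n < termv A N].

Lemma termv_ge0 A n : 0 <= termv A n.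
Proof. by rewrite /termv mulr_ge0 ?absv_ge0 ?exprn_ge0 ?ltW. Qed.

Lemma termv_gt0 A n : A`_n != 0 -> 0 < termv A n.
Proof. by move=> An; rewrite /termv mulr_gt0 ?absv_gt0 ?exprn_gt0. Qed.

Lemma termv_coefM A B i j : (j <= i)%N ->
  v (A`_j * B`_(i - j)) * rho ^+ i = termv A j * termv B (i - j).
Proof. by move=> le_ji; rewrite absvM /termv -[in rho ^+ i](subnKC le_ji) exprD mulrACA. Qed.

Section Product.
Variables (N M : nat) (A B : {poly K}).
Hypotheses (domA : dominant N A) (domB : dominant M B).

Lemma termv_prod_le i (j : 'I_i.+1) :
  v (A`_j * B`_(i - j)) * rho ^+ i <= termv A N * termv B M.
Proof.
have [_ leA _] := domA; have [_ leB _] := domB.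
rewrite termv_coefM; last by rewrite -ltnS.
by rewrite ler_pM ?termv_ge0.
Qed.

Lemma termv_prod_lt i (j : 'I_i.+1) : (N < j)%N || (M < i - j)%N ->
  v (A`_j * B`_(i - j)) * rho ^+ i < termv A N * termv B M.
Proof.
have [A0 leA ltA] := domA; have [B0 leB ltB] := domB.
rewrite termv_coefM; last by rewrite -ltnS.
case/orP=> [lt_Nj|lt_Mij].
  rewrite (le_lt_trans (ler_wpM2l (termv_ge0 _ _) (leB _))) //.
  by rewrite ltr_pM2r ?termv_gt0 ?ltA.
rewrite (le_lt_trans (ler_wpM2r (termv_ge0 _ _) (leA _))) //.
by rewrite ltr_pM2l ?termv_gt0 ?ltB.
Qed.

Lemma termv_dominantM : termv (A * B) (N + M) = termv A N * termv B M.
Proof.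
have lt_N : (N < (N + M).+1)%N by rewrite ltnS leq_addr.
have split_c : v A`_N * v B`_M * rho ^+ (N + M) = termv A N * termv B M.
  by rewrite exprD mulrACA.
rewrite /termv coefM (bigD1 (Ordinal lt_N)) //= addKn absvD_eql absvM ?split_c //.
rewrite -(ltr_pM2r (exprn_gt0 (N + M) rho_gt0)) split_c.
have [A0 _ _] := domA; have [B0 _ _] := domB.
apply: absv_sum_lt => [||j]; rewrite ?exprn_ge0 ?ltW //; first by rewrite mulr_gt0 ?termv_gt0.
rewrite -val_eqE /= => ne_jN; apply: termv_prod_lt.
by case: ltngtP ne_jN => //= lt_jN _; rewrite ltn_subRL ltn_add2r.
Qed.

Lemma dominantM : dominant (N + M) (A * B).
Proof.
have [A0 _ _] := domA; have [B0 _ _] := domB.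
have c_gt0 : 0 < termv A N * termv B M by rewrite mulr_gt0 ?termv_gt0.
split; rewrite ?termv_dominantM.
- apply: contraTneq c_gt0 => AB0.
  by rewrite -termv_dominantM /termv AB0 absv0 mul0r ltxx.
- move=> n; rewrite /termv coefM absv_sum_le ?exprn_ge0 ?ltW // => j _.
  exact: termv_prod_le.
- move=> n lt_n; rewrite /termv coefM absv_sum_lt ?exprn_ge0 ?ltW // => j _.
  by apply: termv_prod_lt; have := ltn_ord j; lia.
Qed.

End Product.

Lemma dominantZ N c A : c != 0 -> dominant N A -> dominant N (c *: A).
Proof.
move=> c0 [A0 leA ltA]; have vc_gt0 := absv_gt0 c0.
split; first by rewrite coefZ mulf_neq0.
  by move=> n; rewrite /termv !coefZ !absvM -!mulrA ler_pM2l ?leA.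
by move=> n lt_Nn; rewrite /termv !coefZ !absvM -!mulrA ltr_pM2l ?ltA.
Qed.

Lemma dominant1 : dominant 0 1.
Proof.
have termv1 n : termv 1 n = (n == 0)%:R.
  by case: n => [|n]; rewrite /termv coef1 /= ?mulr1n ?mulr0n ?absv1 ?absv0 ?mulr1 ?mul0r.
split=> [|n|n lt_0n]; rewrite ?coef1 ?oner_eq0 // !termv1 /=.
  by case: (n == 0); rewrite ?ler01.
by rewrite gtn_eqF // ltr01.
Qed.

Lemma termv_XsubC e n : termv ('X - e%:P) n = [:: v e; rho]`_n.
Proof.
rewrite /termv coefB coefX coefC.
case: n => [|[|n]] /=; rewrite ?subr0 ?sub0r ?absvN ?absv1 ?absv0 ?mul1r ?mul0r ?nth_nil //.
by rewrite expr0 mulr1.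
Qed.

Lemma dominant_XsubC_in e : v e <= rho -> dominant 1 ('X - e%:P).
Proof.
move=> le_e; split=> [|n|[|[|n]] // _]; rewrite ?termv_XsubC /= ?nth_nil //.
  by rewrite coefB coefX coefC subr0 oner_eq0.
by case: n => [|[|n]] //=; rewrite nth_nil ltW.
Qed.

Lemma dominant_XsubC_out e : rho < v e -> dominant 0 ('X - e%:P).
Proof.
move=> lt_e; have e0 : e != 0 by apply: contraTneq lt_e => ->; rewrite absv0 ltNge ltW.
split=> [|n|[|[|n]] // _]; rewrite ?termv_XsubC /= ?nth_nil ?absv_gt0 //.
  by rewrite coefB coefX coefC sub0r oppr_eq0.
by case: n => [|[|n]] //=; rewrite ?nth_nil ltW ?absv_gt0.
Qed.

Lemma dominant_horner_le N A t : dominant N A -> v t <= rho -> v A.[t] <= termv A N.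
Proof.
move=> [_ leA _] le_t; rewrite -[v _]mulr1 horner_coef.
apply: absv_sum_le; rewrite ?ler01 ?termv_ge0 // => i _.
rewrite mulr1 absvM absvX (le_trans _ (leA i)) // ler_wpM2l //.
by apply: lerXn2r; rewrite // nnegrE ?absv_ge0 // ltW.
Qed.

Lemma dominant0_horner A t : dominant 0 A -> v t <= rho -> v A.[t] = v A`_0.
Proof.
move=> [A0 _ ltA] le_t; rewrite horner_coef.
have size_gt0 : (0 < size A)%N.
  by rewrite size_poly_gt0; apply: contraNneq A0 => ->; rewrite coef0.
have termv0 : termv A 0 = v A`_0 by rewrite /termv expr0 mulr1.
rewrite -(prednK size_gt0) big_ord_recl /= expr0 mulr1 absvD_eql //.
rewrite -[v (\sum_(_ < _) _)]mulr1 -termv0.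
apply: absv_sum_lt; rewrite ?ler01 ?termv_gt0 // => i _.
rewrite mulr1 absvM absvX (le_lt_trans _ (ltA i.+1 isT)) // ler_wpM2l ?absv_ge0 //.
by apply: lerXn2r; rewrite // nnegrE ?absv_ge0 // ltW.
Qed.

Lemma dominant_prod_XsubC x (s : seq K) (inner : pred K) :
  (forall z, z \in s -> inner z -> v (z - x) <= rho) ->
  (forall z, z \in s -> ~~ inner z -> rho < v (z - x)) ->
  dominant (count inner s) (\prod_(z <- s) ('X - (z - x)%:P)).
Proof.
elim: s => [|z s IH] in_le out_gt /=; first by rewrite big_nil; exact: dominant1.
rewrite big_cons; apply: dominantM; last first.
  by apply: IH => y ys; [apply: in_le | apply: out_gt]; rewrite inE ys orbT.
have zs := mem_head z s.
by case: (boolP (inner z)) => /= [zin | zout];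
  [apply: dominant_XsubC_in; exact: in_le | apply: dominant_XsubC_out; exact: out_gt].
Qed.

Definition gauss_lt1 A := forall n, termv A n < 1.

Lemma gauss_lt1D A B : gauss_lt1 A -> gauss_lt1 B -> gauss_lt1 (A + B).
Proof.
move=> ltA ltB n; have rhon_ge0 : 0 <= rho ^+ n by rewrite exprn_ge0 ?ltW.
have := absvD A`_n B`_n; rewrite le_max /termv coefD => /orP[] le_AB.
  exact: le_lt_trans (ler_wpM2r rhon_ge0 le_AB) (ltA n).
exact: le_lt_trans (ler_wpM2r rhon_ge0 le_AB) (ltB n).
Qed.

Lemma gauss_lt1M A B : gauss_lt1 A -> gauss_lt1 B -> gauss_lt1 (A * B).
Proof.
move=> ltA ltB n; rewrite /termv coefM.
apply: absv_sum_lt; rewrite ?exprn_ge0 ?ltW ?ltr01 // => j _.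
by rewrite termv_coefM -1?ltnS ?ltn_ord // mulr_ilt1 ?termv_ge0.
Qed.

Lemma gauss_lt1X A k : gauss_lt1 A -> gauss_lt1 (A ^+ k.+1).
Proof. by move=> ltA; elim: k => [|k IH]; [rewrite expr1 | rewrite exprS; apply: gauss_lt1M]. Qed.

Lemma gauss_lt1_sum (I : Type) (s : seq I) (F : I -> {poly K}) :
  (forall i, gauss_lt1 (F i)) -> gauss_lt1 (\sum_(i <- s) F i).
Proof.
move=> ltF; elim/big_ind: _ => [n||i _]; last exact: ltF.
  by rewrite /termv coef0 absv0 mul0r ltr01.
exact: gauss_lt1D.
Qed.

Lemma dominant0_inv_mod n Q : dominant 0 Q ->
  exists u, [/\ dominant 0 u, v u`_0 = (v Q`_0)^-1 & 'X^n %| u * Q - 1].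
Proof.
move=> [Q0 _ ltQ]; set q := Q`_0 in Q0 ltQ *.
set B := 1 - q^-1 *: Q.
have B0 : B`_0 = 0 by rewrite coefB coef1 coefZ mulVf ?subrr.
have ltB : gauss_lt1 B.
  case=> [|m]; first by rewrite /termv B0 absv0 mul0r ltr01.
  rewrite /termv coefB coef1 sub0r coefZ absvN absvM absvV -mulrA.
  rewrite ltr_pdivrMl ?absv_gt0 // mulr1.
  by have := ltQ m.+1 isT; rewrite /termv expr0 mulr1.
set S := \sum_(i < n) B ^+ i.+1.
have ltS : gauss_lt1 S by apply: gauss_lt1_sum => i; exact: gauss_lt1X.
have S0 : v S`_0 < 1 by have := ltS 0; rewrite /termv expr0 mulr1.
have u0 : v (1 + S)`_0 = 1 by rewrite coefD coef1 /= absvD_eql absv1.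
have termv_u0 : termv (1 + S) 0 = 1 by rewrite /termv u0 expr0 mulr1.
(* u is the truncated geometric series for 1 / Q = q^-1 / (1 - B). *)
exists (q^-1 *: (1 + S)); split.
- apply: dominantZ; first by rewrite invr_eq0.
  split=> [|[|m]|[|m] // _]; rewrite ?termv_u0 //.
  + apply/eqP => S10; move: u0; rewrite S10 absv0 => /esym/eqP.
    by rewrite oner_eq0.
  + rewrite ltW // /termv coefD coef1 add0r; exact: (ltS m.+1).
  + rewrite /termv coefD coef1 add0r; exact: (ltS m.+1).
- by rewrite coefZ absvM absvV u0 mulr1.
- have -> : q^-1 *: (1 + S) * Q - 1 = - (B * B ^+ n).
    have -> : q^-1 *: (1 + S) * Q = (1 + S) * (1 - B).
      have qQ : q^-1 *: Q = 1 - B by rewrite /B opprB addrC subrK.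
      by rewrite -scalerAl scalerAr qQ.
    have geom : (1 - B) * \sum_(i < n.+1) B ^+ i = 1 - B ^+ n.+1.
      by rewrite -[1 - B]opprB mulNr -subrX1 opprB.
    rewrite -exprS -[1 + S](big_ord_recl n (fun i => B ^+ i)) /= mulrC geom.
    by rewrite addrAC subrr sub0r.
  by rewrite dvdpNr dvdp_mull // dvdp_Xn_exp.
Qed.

Lemma dominant_deriv_bound N F Q G : (0 < N)%N ->
  dominant N F -> dominant 0 Q -> dominant 0 G -> G = F^`() * Q - F * Q^`() ->
  v N%:R * termv F N <= rho * (v G`_0 / v Q`_0).
Proof.
move=> N_gt0 domF domQ domG defG.
have [u [domu u0 Xu]] := dominant0_inv_mod N.+1 domQ.
have domFu : dominant N (F * u) by rewrite -[N]addn0; exact: dominantM.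
have domGu2 : dominant 0 (G * u ^+ 2).
  by rewrite expr2 -[0%N]add0n; apply: dominantM => //; exact: (dominantM domu domu).
(* Modulo X^N, G u^2 is the derivative of the power series F u of F / Q. *)
have coefGu2 : (G * u ^+ 2)`_N.-1 = (F * u)`_N *+ N.
  have lt_predN : (N.-1 < N)%N by rewrite ltn_predL.
  have := dvdp_Xn_coef (quotient_deriv_mod F Xu) lt_predN.
  by rewrite -defG coefB coef_deriv (prednK N_gt0) => /eqP; rewrite subr_eq0 => /eqP.
have termvFu : termv (F * u) N = termv F N * v u`_0.
  by have := termv_dominantM domF domu; rewrite addn0 /termv expr0 mulr1.
have termvGu2 : termv (G * u ^+ 2) 0 = v G`_0 * v u`_0 ^+ 2.
  have termv_uu := termv_dominantM domu domu.
  have := termv_dominantM domG (dominantM domu domu); rewrite !addn0 in termv_uu *.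
  by rewrite expr2 => ->; rewrite termv_uu /termv !expr0 !mulr1.
have Q0V_gt0 : 0 < (v Q`_0)^-1 by rewrite invr_gt0; case: domQ => /absv_gt0.
have [_ leGu2 _] := domGu2; have le_coef := leGu2 N.-1.
rewrite termvGu2 /termv coefGu2 -mulr_natr absvM in le_coef.
move: le_coef => /(ler_wpM2l (ltW rho_gt0)).
have -> : rho * (v (F * u)`_N * v N%:R * rho ^+ N.-1) = v N%:R * termv (F * u) N.
  by rewrite /termv -(prednK N_gt0) exprS /=; ring.
rewrite termvFu u0 mulrA => le_rho.
rewrite -(ler_pM2r Q0V_gt0) (le_trans le_rho) //.
by rewrite expr2 !mulrA lexx.
Qed.

Lemma dominant_quotient_bound N F Q G t : (0 < N)%N ->
  dominant N F -> dominant 0 Q -> dominant 0 G -> G = F^`() * Q - F * Q^`() ->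
  v t <= rho -> v (F.[t] / Q.[t]) * v N%:R <= rho * v (G`_0 / Q`_0 ^+ 2).
Proof.
move=> N_gt0 domF domQ domG defG le_t.
have Q0V_ge0 : 0 <= (v Q`_0)^-1 by rewrite invr_ge0.
have bound := dominant_deriv_bound N_gt0 domF domQ domG defG.
rewrite !absvM !absvV absvX (dominant0_horner domQ le_t) mulrAC.
apply: le_trans (_ : v N%:R * termv F N * (v Q`_0)^-1 <= _).
  rewrite [v N%:R * _]mulrC ler_wpM2r // ler_wpM2r ?absv_ge0 //.
  exact: dominant_horner_le.
rewrite (le_trans (ler_wpM2r Q0V_ge0 bound)) //.
by rewrite expr2 invfM !mulrA lexx.
Qed.

End DominantTerm.
End UltrametricAbs.

Section DiskEstimate.
Variables (R : realFieldType) (K : closedFieldType) (v : K -> R).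
Hypothesis vU : ultrametric_abs v.

Lemma roots_mult_factor (A : {poly K}) : A = lead_coef A *: \prod_(z <- roots_mult A) ('X - z%:P).
Proof. exact: svalP (closed_field_poly_normal A). Qed.

Lemma mem_roots_mult (A : {poly K}) z : A != 0 -> (z \in roots_mult A) = root A z.
Proof. by move=> A0; rewrite [in RHS](roots_mult_factor A) rootZ ?lead_coef_eq0 // root_prod_XsubC. Qed.

Lemma dominant_recenter rho x (A : {poly K}) (inner : pred K) : 0 < rho -> A != 0 ->
  (forall z, root A z -> inner z -> v (z - x) <= rho) ->
  (forall z, root A z -> ~~ inner z -> rho < v (z - x)) ->
  dominant v rho (count inner (roots_mult A)) (recenter x A).
Proof.
move=> rho_gt0 A0 in_le out_gt.
rewrite [in recenter x A](roots_mult_factor A) recenter_prod_XsubC.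
apply: dominantZ; rewrite ?lead_coef_eq0 //.
by apply: dominant_prod_XsubC => // z; rewrite mem_roots_mult //; [apply: in_le | apply: out_gt].
Qed.

Lemma dominant0_recenter rho x (A : {poly K}) : 0 < rho -> A != 0 ->
  (forall z, root A z -> rho < v (z - x)) -> dominant v rho 0 (recenter x A).
Proof.
move=> rho_gt0 A0 out_gt; rewrite -(count_pred0 (roots_mult A)).
by apply: dominant_recenter => // z Az _; exact: out_gt.
Qed.

Section Disk.
Variables (P Q : {poly K}) (x a : K) (r : R) (d : nat).
Let D : pred K := fun z => v (z - a) < r.
Let F := P - (P.[x] / Q.[x]) *: Q.
Let G := P^`() * Q - P * Q^`().
Hypotheses (Dx : D x) (Q_neq0 : Q != 0) (F_neq0 : F != 0).
Hypotheses (Q_D : forall z, D z -> Q.[z] != 0) (G_D : forall z, D z -> G.[z] != 0).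
Hypotheses (count_F : count D (roots_mult F) = d) (d_gt0 : (0 < d)%N).

Lemma disk_deviation_rho w rho : D w -> 0 < rho -> rho < r -> v (w - x) <= rho ->
  (forall z, z \in roots_mult F -> D z -> v (z - x) <= rho) ->
  v (P.[w] / Q.[w] - P.[x] / Q.[x]) * v d%:R <= rho * v (G.[x] / Q.[x] ^+ 2).
Proof.
move=> Dw rho_gt0 lt_rho le_wx roots_le.
have far z : ~~ D z -> rho < v (z - x).
  by rewrite -leNgt => /(disk_dist_ge vU Dx); exact: lt_le_trans lt_rho.
have off_D A : (forall z, D z -> A.[z] != 0) -> forall z, root A z -> rho < v (z - x).
  by move=> A_D z Az; apply: far; apply: contraL Az => /A_D; rewrite /root.
have G_neq0 : G != 0 by apply: contraTneq (G_D Dx) => ->; rewrite horner0 eqxx.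
have domF : dominant v rho d (recenter x F).
  rewrite -count_F; apply: dominant_recenter => // z Fz.
    by apply: roots_le; rewrite mem_roots_mult.
  exact: far.
have domQ := dominant0_recenter rho_gt0 Q_neq0 (off_D Q Q_D).
have domG := dominant0_recenter rho_gt0 G_neq0 (off_D G G_D).
have defG : recenter x G = (recenter x F)^`() * recenter x Q - recenter x F * (recenter x Q)^`().
  rewrite !recenter_deriv -!recenterM -recenterB /G /F derivB derivZ.
  by congr recenter; rewrite -!mul_polyC; ring.
have := dominant_quotient_bound vU rho_gt0 d_gt0 domF domQ domG defG le_wx.
rewrite !recenter_horner !recenter_coef0.
suff -> : F.[w] / Q.[w] = P.[w] / Q.[w] - P.[x] / Q.[x] by [].
by rewrite /F !hornerE; field; rewrite !Q_D.
Qed.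

Lemma disk_deviation_le w b : D w -> (forall z, D z -> v (z - x) <= b) ->
  v (P.[w] / Q.[w] - P.[x] / Q.[x]) * v d%:R <= b * v (G.[x] / Q.[x] ^+ 2).
Proof.
move=> Dw le_b; have L_ge0 := absv_ge0 vU (G.[x] / Q.[x] ^+ 2).
have [->|w_neq_x] := eqVneq w x.
  by rewrite subrr absv0 // mul0r mulr_ge0 // (le_trans (absv_ge0 vU _) (le_b _ Dx)).
set rho := \big[Num.max/v (w - x)]_(z <- roots_mult F | D z) v (z - x).
have le_wx : v (w - x) <= rho by exact: bigmax_ge_id.
apply: le_trans (disk_deviation_rho Dw _ _ le_wx _) _.
- by rewrite (lt_le_trans _ le_wx) // absv_gt0 // subr_eq0.
- by apply: bigmax_lt => [|z Dz]; apply: (disk_dist_lt vU (a := a)).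
- by move=> z Fz Dz; apply: (le_bigmax_seq _ z).
- by rewrite ler_wpM2r // bigmax_le // le_b.
Qed.

End Disk.

End DiskEstimate.

Section Diameter.
Variables (R : realType) (K : closedFieldType) (v : K -> R).
Hypothesis vU : ultrametric_abs v.

Lemma dist_le_diam (S : set K) a c z w : (forall z, S z -> v (z - a) <= c) ->
  S z -> S w -> v (z - w) <= diam v S.
Proof.
move=> le_c Sz Sw; apply: sup_upper_bound; last by exists z, w.
split; first by exists (v (z - w)), z, w.
by exists c => _ [z' [w' [Sz' [Sw' ->]]]]; apply: (disk_dist_le vU (le_c w' Sw')); exact: le_c.
Qed.

Lemma diam_le_center (S : set K) a c : S a -> (forall z, S z -> v (z - a) <= c) ->
  diam v S <= c.
Proof.
move=> Sa le_c; apply: ge_sup; first by exists (v (a - a)), a, a.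
by move=> _ [z [w [Sz [Sw ->]]]]; apply: (disk_dist_le vU (le_c w Sw)); exact: le_c.
Qed.

End Diameter.

Lemma leq_Bernoulli p k : (0 < p)%N -> (1 + k * (p - 1) <= p ^ k)%N.
Proof.
move=> p_gt0; elim: k => [|k IH]; first by rewrite mul0n expn0.
have pk_gt0 : (0 < p ^ k)%N by rewrite expn_gt0 p_gt0.
have le_p1 : (p - 1 <= (p - 1) * p ^ k)%N by rewrite leq_pmulr.
have split_p : (p * p ^ k = (p - 1) * p ^ k + p ^ k)%N by rewrite -{1}(subnK p_gt0) mulnDl mul1n.
by rewrite expnS split_p mulSn addnCA; exact: leq_add.
Qed.

Lemma absv_natr_ge (R : realType) (K : fieldType) (v : K -> R) p n :
  ultrametric_abs v -> prime p -> v p%:R = p%:R^-1 -> (0 < n)%N ->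
  ((p%:R : R) `^ (- (p%:R - 1)^-1)) ^+ n.-1 <= v n%:R.
Proof.
move=> vU p_prime vp n_gt0; have p_gt1 := prime_gt1 p_prime.
have pV_lt1 : (p%:R : R)^-1 < 1 by rewrite invf_lt1 ?ltr1n // ltr0n ltnW.
set A := _ `^ _; have A_ge0 : 0 <= A := powR_ge0 _ _.
have Ap : A ^+ (p - 1) = p%:R^-1.
  rewrite /A -powR_mulrn // -powRrM natrB 1?ltnW // mulNr mulVf ?powRN ?powRr1 //.
  by rewrite subr_eq0 gt_eqF // ltr1n.
have A_le1 : A <= 1.
  rewrite leNgt; apply/negP => A_gt1.
  by have := exprn_egt1 (p - 1) A_gt1; rewrite Ap subn_eq0 leqNgt p_gt1 ltNge ltW.
have [m co_pm def_n] := pfactor_coprime p_prime n_gt0.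
have m_gt0 : (0 < m)%N by move: n_gt0; rewrite def_n muln_gt0 => /andP[].
have vp_lt1 : v p%:R < 1 by rewrite vp.
rewrite [in v _]def_n natrM natrX !absvM // absvX // vp (absv_natr_coprime vU vp_lt1 co_pm).
rewrite mul1r -Ap -exprM ler_wiXn2l //.
have pk_le : (p ^ logn p n <= n)%N by rewrite [in X in (_ <= X)%N]def_n leq_pmull.
by rewrite mulnC -ltnS prednK // -add1n (leq_trans (leq_Bernoulli _ (prime_gt0 p_prime))).
Qed.

Lemma rat_derivE (K : closedFieldType) (P Q : {poly K}) z :
  rat_deriv P Q z = (P^`() * Q - P * Q^`()).[z] / Q.[z] ^+ 2.
Proof. by rewrite /rat_deriv !hornerE. Qed.

Local Open Scope classical_set_scope.

Section RationalMapOnDisk.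
Variables (R : realType) (K : closedFieldType) (v : K -> R).
Hypothesis vU : ultrametric_abs v.
Variables (P Q : {poly K}) (x a : K) (r : R) (d : nat).
Local Notation D := (open_disk v a r).
Local Notation psi := (rat_eval P Q).
Hypotheses (Q_neq0 : Q != 0) (nonconst : ~ exists c, P = c *: Q) (Dx : D x).
Hypotheses (D_noncrit : forall z, D z -> ~ rat_crit P Q z)
  (D_nopole : forall z, D z -> Q.[z] != 0).
Hypotheses (D_deg : forall y, (psi @` D) y -> preimage_count P Q D y = d)
  (d_gt0 : (0 < d)%N) (vd_gt0 : 0 < v d%:R).

Lemma dist_le_diam_disk z : D z -> v (z - x) <= diam v D.
Proof. by move=> Dz; apply: (dist_le_diam vU (a := a) (c := r)) => // w /ltW. Qed.

Lemma rat_eval_dist_le w : D w ->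
  v (psi w - psi x) <= diam v D * v (rat_deriv P Q x) / v d%:R.
Proof.
move=> Dw; rewrite ler_pdivlMr // rat_derivE.
have F_neq0 : P - (P.[x] / Q.[x]) *: Q != 0.
  by apply: contra_not_neq nonconst => /eqP; rewrite subr_eq0 => /eqP ->; exists (P.[x] / Q.[x]).
have G_D z : D z -> (P^`() * Q - P * Q^`()).[z] != 0.
  move=> Dz; apply: contra_not_neq (D_noncrit Dz) => G0; left.
  by rewrite rat_derivE G0 mul0r; split; first exact: D_nopole.
have count_F : count (fun z => v (z - a) < r) (roots_mult (P - (P.[x] / Q.[x]) *: Q)) = d.
  by rewrite -(@D_deg (P.[x] / Q.[x])); [apply: eq_count => z; rewrite asboolb | exists x].
have := disk_deviation_le vU Dx Q_neq0 F_neq0 D_nopole G_D count_F d_gt0 Dw dist_le_diam_disk.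
by rewrite /rat_eval.
Qed.

Lemma diam_image_ge0 : 0 <= diam v (psi @` D).
Proof.
have psi_x : (psi @` D) (psi x) by exists x.
have := dist_le_diam vU (a := psi x) _ psi_x psi_x; rewrite subrr absv0 //; apply.
by move=> _ [w Dw <-]; exact: rat_eval_dist_le.
Qed.

Lemma diam_image_le : diam v (psi @` D) * v d%:R <= diam v D * v (rat_deriv P Q x).
Proof.
rewrite -ler_pdivlMr //; apply: (diam_le_center vU (a := psi x)); first by exists x.
by move=> _ [w Dw <-]; exact: rat_eval_dist_le.
Qed.

End RationalMapOnDisk.

Theorem proposition2p6 (R : realType) (K : closedFieldType) (p : nat)
    (v : K -> R) (P Q : {poly K}) (x a : K) (r : R) (d' : nat) :
  Cp_like p v ->
  Q != 0 -> coprimep P Q -> ~ (exists c : K, P = c *: Q) ->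
  ~ rat_crit P Q x ->
  0 < r -> open_disk v a r x ->
  (forall z, open_disk v a r z -> ~ rat_crit P Q z) ->
  (forall z, open_disk v a r z -> Q.[z] != 0) ->
  (forall y, (rat_eval P Q @` open_disk v a r) y ->
     preimage_count P Q (open_disk v a r) y = d') ->
  (1 <= d')%N ->
  v (rat_deriv P Q x) >=
    ((p%:R : R) `^ (- ((p%:R - 1)^-1 * d'%:R)) *
       diam v (rat_eval P Q @` open_disk v a r)) /
    ((p%:R : R) `^ (- (p%:R - 1)^-1) * diam v (open_disk v a r)).
Proof.
move=> [p_prime [v_ge0 v_eq0 vM vD vp] _ _] Q_neq0 _ nonconst _ _ Dx D_noncrit
  D_nopole D_deg d'_gt0.
have vU : ultrametric_abs v by split.
set A := (p%:R : R) `^ (- (p%:R - 1)^-1).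
have -> : (p%:R : R) `^ (- ((p%:R - 1)^-1 * d'%:R)) = A ^+ d'.
  by rewrite -mulNr powRrM powR_mulrn ?powR_ge0.
have A_gt0 : 0 < A by apply: powR_gt0; rewrite ltr0n prime_gt0.
have vd' := absv_natr_ge vU p_prime vp d'_gt0.
have vd'_gt0 := lt_le_trans (exprn_gt0 d'.-1 A_gt0) vd'.
have image_ge0 := diam_image_ge0 vU Q_neq0 nonconst Dx D_noncrit D_nopole D_deg d'_gt0 vd'_gt0.
have image_le := diam_image_le vU Q_neq0 nonconst Dx D_noncrit D_nopole D_deg d'_gt0 vd'_gt0.
have := dist_le_diam_disk vU Dx Dx; rewrite subrr absv0 // le_eqVlt.
case/orP=> [/eqP <-|disk_gt0]; first by rewrite mulr0 invr0 mulr0 v_ge0.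
rewrite ler_pdivrMr ?mulr_gt0 // -(prednK d'_gt0) exprS -mulrA [_ * (A * _)]mulrCA.
rewrite ler_pM2l // (le_trans (ler_wpM2r image_ge0 vd')) //.
by rewrite mulrC [v (rat_deriv _ _ _) * _]mulrC.
Qed.
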